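(* Let $X_1,\dots,X_n$ be operators in a complex Hilbert space $\mathcal{H}$, each Hermitian or skew-Hermitian, and let $\mathbf{m}=(m^{(1)},\dots,m^{(n)})$ be sequences of positive numbers each satisfying (A2). Put $\mathbf{X}=(X_1,\dots,X_n)$. Then $u\in\mathcal{S}_{\mathbf{m}}(\mathbf{X})$ if and only if $u\in C^\infty(\mathbf{X})$ and there exist constants $A,C>0$ such that $|(\mathbf{X}_\alpha u,u)|\le CA^{|\alpha|}\mathbf{m}_\alpha$ for all $\alpha\in M(n)$.
   Context: Notation: $M(n)=\bigcup_{k\ge1}\{1,\dots,n\}^k$; for $\alpha=(i_1,\dots,i_k)\in M(n)$, $|\alpha|=k$ and $|\alpha|_j=\mathrm{card}\{l: i_l=j\}$. $\mathbf{X}_\alpha=X_{i_1}\cdots X_{i_k}$; $C^\infty(\mathbf{X})=\{u\in\mathcal{H}: u\in\mathrm{Dom}(\mathbf{X}_\alpha)\ \forall\alpha\in M(n)\}$. $\mathbf{m}_\alpha=m^{(1)}_{|\alpha|_1}\cdots m^{(n)}_{|\alpha|_n}$. $\mathcal{S}_{\mathbf{m}}(\mathbf{X})=\{u\in C^\infty(\mathbf{X}): \exists A,C>0,\ \|\mathbf{X}_\alpha u\|\le CA^{|\alpha|}\mathbf{m}_\alpha\ \forall\alpha\in M(n)\}$. Condition (A2): there is $H>0$ with $m^{(j)}_{p+q}\le H^{p+q}m^{(j)}_pm^{(j)}_q$ for all $j$ and all $p,q\in\mathbb{N}$. *)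

From mathcomp Require Import all_boot all_order all_algebra.
From mathcomp Require Import reals.
From mathcomp Require Export complex.
Import GRing.Theory Num.Theory.
Set Implicit Arguments. Unset Strict Implicit. Unset Printing Implicit Defensive.
Local Open Scope ring_scope.
Local Open Scope complex_scope.

Section Hilbert.
Variables (R : realType) (H : lmodType R[i]) (ip : H -> H -> R[i]).

Definition is_inner_product : Prop :=
  [/\ forall (a : R[i]) u v w, ip (a *: u + v) w = a * ip u w + ip v w,
      forall u v, ip v u = (ip u v)^*,
      forall u, 0 <= ip u u
    & forall u, ip u u = 0 -> u = 0].

Definition hnorm (u : H) : R := Num.sqrt (Normc.normc (ip u u)).

Definition hilbert_complete : Prop :=
  forall s : nat -> H,
    (forall e : R, 0 < e -> exists N, forall p q, (N <= p)%N -> (N <= q)%N ->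
        hnorm (s p - s q) < e) ->
    exists v : H, forall e : R, 0 < e -> exists N, forall p, (N <= p)%N ->
        hnorm (s p - v) < e.

Definition is_operator (D : pred H) (X : H -> H) : Prop :=
  [/\ 0 \in D,
      forall (a : R[i]) u v, u \in D -> v \in D -> a *: u + v \in D
    & forall (a : R[i]) u v, u \in D -> v \in D -> X (a *: u + v) = a *: X u + X v].

Definition is_hermitian (D : pred H) (X : H -> H) : Prop :=
  forall u v, u \in D -> v \in D -> ip (X u) v = ip u (X v).

Definition is_skew_hermitian (D : pred H) (X : H -> H) : Prop :=
  forall u v, u \in D -> v \in D -> ip (X u) v = - ip u (X v).

Variables (n : nat) (X : 'I_n -> H -> H) (D : 'I_n -> pred H).

(* X_alpha u = X_{i1} (X_{i2} ( ... (X_{ik} u))) for alpha = [:: i1; ...; ik] *)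
Definition Xmul (alpha : seq 'I_n) (u : H) : H := foldr (fun i v => X i v) u alpha.

Fixpoint in_dom (alpha : seq 'I_n) (u : H) : Prop :=
  match alpha with
  | [::] => True
  | i :: s => in_dom s u /\ Xmul s u \in D i
  end.

Definition in_M (alpha : seq 'I_n) : bool := (0 < size alpha)%N.

Definition Cinf (u : H) : Prop := forall alpha, in_M alpha -> in_dom alpha u.

Variable m : 'I_n -> nat -> R.

Definition m_mul (alpha : seq 'I_n) : R := \prod_(j < n) m j (count_mem j alpha).

(* condition (A2) for all the sequences m^(j), with a common constant *)
Definition cond_A2 : Prop :=
  exists Hc : R, 0 < Hc /\
    forall j p q, m j (p + q) <= Hc ^+ (p + q) * m j p * m j q.

Definition S_m (u : H) : Prop :=
  Cinf u /\ exists A C : R, [/\ 0 < A, 0 < C &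
    forall alpha, in_M alpha ->
      hnorm (Xmul alpha u) <= C * A ^+ size alpha * m_mul alpha].

End Hilbert.

(* For a word alpha write alpha~ for its reversal.  Since every X_j is
   Hermitian or skew-Hermitian, moving the letters of X_alpha across the inner
   product one at a time gives |(X_alpha u, X_alpha u)| = |(X_{alpha~ alpha} u, u)|,
   i.e. ||X_alpha u||^2 is a matrix coefficient of a word of twice the length.
   Condition (A2) bounds m_{alpha~ alpha} by H^{2|alpha|} m_alpha^2, so a bound
   C A^|beta| m_beta on the coefficients |(X_beta u, u)| yields the bound
   sqrt C (A H)^|alpha| m_alpha on ||X_alpha u||.  The converse is Cauchy-Schwarz. *)
From mathcomp Require Import all_boot all_order all_algebra.
From mathcomp Require Import reals complex ring lra.
Import Order.TTheory GRing.Theory Num.Theory.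
Set Implicit Arguments. Unset Strict Implicit. Unset Printing Implicit Defensive.
Local Open Scope ring_scope.
Local Open Scope complex_scope.
Local Notation "x ^*" := (conjc x) : ring_scope.

Lemma normc_ge0 {R : rcfType} (z : R[i]) : 0 <= Normc.normc z.
Proof. by case: z => a b; rewrite sqrtr_ge0. Qed.

Lemma normc_conj {R : rcfType} (z : R[i]) : Normc.normc z^* = Normc.normc z.
Proof. by case: z => a b; rewrite /Normc.normc /= sqrrN. Qed.

Section InnerProduct.
Variables (R : realType) (H : lmodType R[i]) (ip : H -> H -> R[i]).
Hypothesis ipP : is_inner_product ip.

Lemma ipDZl a u v w : ip (a *: u + v) w = a * ip u w + ip v w.
Proof. by case: ipP => h _ _ _; apply: h. Qed.

Lemma ip_conj u v : ip v u = (ip u v)^*.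
Proof. by case: ipP => _ h _ _; apply: h. Qed.

Lemma ip_ge0 u : 0 <= ip u u.
Proof. by case: ipP => _ _ h _; apply: h. Qed.

Lemma ip_eq0 u : ip u u = 0 -> u = 0.
Proof. by case: ipP => _ _ _ h; apply: h. Qed.

Lemma ipBl u v w : ip (u - v) w = ip u w - ip v w.
Proof. by rewrite addrC -scaleN1r ipDZl mulN1r addrC. Qed.

Lemma ip0l w : ip 0 w = 0.
Proof. by have := ipBl 0 0 w; rewrite !subrr. Qed.

Lemma ipZl a u w : ip (a *: u) w = a * ip u w.
Proof. by have := ipDZl a u 0 w; rewrite !addr0 ip0l addr0. Qed.

Lemma ip0r w : ip w 0 = 0.
Proof. by rewrite ip_conj ip0l conjc0. Qed.

Lemma ipZr a u w : ip w (a *: u) = a^* * ip w u.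
Proof. by rewrite ip_conj ipZl rmorphM /= -ip_conj. Qed.

Lemma ipBr u v w : ip w (u - v) = ip w u - ip w v.
Proof. by rewrite ip_conj ipBl rmorphB /= -!ip_conj. Qed.

Lemma ip_conj_diag u : (ip u u)^* = ip u u.
Proof. by have /complex_realP[k ->] := ger0_real (ip_ge0 u); rewrite conjc_real. Qed.

Lemma ip_Cauchy_Schwarz u v : `|ip v u| ^+ 2 <= ip u u * ip v v.
Proof.
have [uu0|uu_neq0] := eqVneq (ip u u) 0.
  by rewrite (ip_eq0 uu0) ip0r ip0l normr0 expr2 !mul0r.
have uu_gt0 : 0 < ip u u by rewrite lt_def uu_neq0 ip_ge0.
(* expand 0 <= (w, w) for w = (u,u) v - (v,u) u *)
have := ip_ge0 (ip u u *: v - ip v u *: u).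
rewrite ipBl !ipZl !ipBr !ipZr ip_conj_diag (ip_conj v u).
have -> : ip u u * (ip u u * ip v v - (ip v u)^* * ip v u) -
          ip v u * (ip u u * (ip v u)^* - (ip v u)^* * ip u u)
        = ip u u * (ip u u * ip v v - ip v u * (ip v u)^*) by ring.
by rewrite pmulr_rge0 // subr_ge0 sqr_normc.
Qed.

Lemma normc_ip_le u v : Normc.normc (ip v u) <= hnorm ip v * hnorm ip u.
Proof.
have CS : Normc.normc (ip v u) ^+ 2 <= Normc.normc (ip u u) * Normc.normc (ip v v).
  rewrite -lecR rmorphXn rmorphM /=.
  have CS := ip_Cauchy_Schwarz u v.
  by rewrite -(ger0_norm (ip_ge0 u)) -(ger0_norm (ip_ge0 v)) in CS.
rewrite /hnorm mulrC -sqrtrM ?normc_ge0 //.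
by rewrite -(ger0_norm (normc_ge0 (ip v u))) -sqrtr_sqr ler_sqrt // mulr_ge0 ?normc_ge0.
Qed.

End InnerProduct.

Section Words.
Variables (R : realType) (H : lmodType R[i]) (ip : H -> H -> R[i]).
Variables (n : nat) (X : 'I_n -> H -> H) (D : 'I_n -> pred H).
Hypothesis ipP : is_inner_product ip.
Hypothesis XhP : forall j, is_hermitian ip (D j) (X j) \/ is_skew_hermitian ip (D j) (X j).
Variable u : H.
Hypothesis Xmul_dom : forall (b : seq 'I_n) j, Xmul X b u \in D j.

Lemma normc_ip_Xmul_cat_rev s g d :
  Normc.normc (ip (Xmul X (s ++ g) u) (Xmul X d u)) =
  Normc.normc (ip (Xmul X g u) (Xmul X (rev s ++ d) u)).
Proof.
elim: s d => [//|i s IHs] d.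
rewrite rev_cons cat_rcons -IHs /=.
by case: (XhP i) => XiP; rewrite XiP ?normcN.
Qed.

Lemma normc_ip_Xmul_diag alpha :
  Normc.normc (ip (Xmul X alpha u) (Xmul X alpha u)) =
  Normc.normc (ip (Xmul X (rev alpha ++ alpha) u) u).
Proof.
have := normc_ip_Xmul_cat_rev alpha [::] alpha.
by rewrite cats0 => ->; rewrite (ip_conj ipP) normc_conj.
Qed.

End Words.

Lemma Cinf_Xmul_dom (R : realType) (H : lmodType R[i]) n (X : 'I_n -> H -> H)
    (D : 'I_n -> pred H) u :
  Cinf X D u -> forall (b : seq 'I_n) j, Xmul X b u \in D j.
Proof. by move=> uP b j; case: (uP (j :: b) isT). Qed.

Lemma sum_count_mem n (s : seq 'I_n) : (\sum_(j < n) count_mem j s)%N = size s.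
Proof.
under eq_bigr => j _ do rewrite -sum1_count.
rewrite (exchange_big_dep xpredT) //= -sum1_size; apply: eq_bigr => i _.
by rewrite (big_pred1 i) // => j; rewrite /= eq_sym.
Qed.

Section Weights.
Variables (R : realType) (n : nat) (m : 'I_n -> nat -> R).
Hypothesis m_ge0 : forall j p, 0 <= m j p.

Lemma m_mul_ge0 alpha : 0 <= m_mul m alpha.
Proof. by apply: prodr_ge0 => j _. Qed.

Lemma m_mul_rev_cat_le (Hc : R) alpha :
  (forall j p q, m j (p + q) <= Hc ^+ (p + q) * m j p * m j q) ->
  m_mul m (rev alpha ++ alpha) <= Hc ^+ (size alpha).*2 * m_mul m alpha ^+ 2.
Proof.
move=> mA2; rewrite /m_mul.
under eq_bigr => j _ do rewrite count_cat count_rev.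
have -> : Hc ^+ (size alpha).*2 * (\prod_(j < n) m j (count_mem j alpha)) ^+ 2 =
    \prod_(j < n) (Hc ^+ (count_mem j alpha + count_mem j alpha) *
                   m j (count_mem j alpha) * m j (count_mem j alpha)).
  by rewrite !big_split /= prodrXr big_split /= sum_count_mem addnn -mulrA expr2.
by apply: ler_prod => j _; rewrite m_ge0 mA2.
Qed.

End Weights.

Section Characterisation.
Variables (R : realType) (H : lmodType R[i]) (ip : H -> H -> R[i]).
Variables (n : nat) (X : 'I_n -> H -> H) (D : 'I_n -> pred H) (m : 'I_n -> nat -> R).
Hypothesis ipP : is_inner_product ip.
Hypothesis m_ge0 : forall j p, 0 <= m j p.

Definition ip_bounded (u : H) : Prop :=
  exists A C : R, [/\ 0 < A, 0 < C &
    forall alpha, in_M alpha ->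
      Normc.normc (ip (Xmul X alpha u) u) <= C * A ^+ size alpha * m_mul m alpha].

Lemma S_m_ip_bounded u : S_m ip X D m u -> ip_bounded u.
Proof.
case=> _ [A [C [A_gt0 C_gt0 uB]]].
have u_ge0 : 0 <= hnorm ip u by apply: sqrtr_ge0.
exists A, (C * hnorm ip u + 1); split=> // [|alpha alphaM].
  by rewrite ltr_wpDl // mulr_ge0 // ltW.
apply: le_trans (normc_ip_le ipP u (Xmul X alpha u)) _.
have K_ge0 : 0 <= A ^+ size alpha * m_mul m alpha.
  by rewrite mulr_ge0 ?m_mul_ge0 // exprn_ge0 // ltW.
have x_ge0 : 0 <= hnorm ip (Xmul X alpha u) by apply: sqrtr_ge0.
have := uB alpha alphaM; rewrite -!mulrA; nra.
Qed.

Hypothesis XhP : forall j, is_hermitian ip (D j) (X j) \/ is_skew_hermitian ip (D j) (X j).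
Hypothesis mA2 : cond_A2 m.

Lemma ip_bounded_S_m u : Cinf X D u -> ip_bounded u -> S_m ip X D m u.
Proof.
move=> uC [A [C [A_gt0 C_gt0 uB]]]; split=> //.
have [Hc [Hc_gt0 mA2P]] := mA2.
exists (A * Hc), (Num.sqrt C); split; [exact: mulr_gt0 | by rewrite sqrtr_gt0 |].
move=> alpha alphaM; set k := size alpha; set M := m_mul m alpha.
have B_ge0 : 0 <= Num.sqrt C * (A * Hc) ^+ k * M.
  by rewrite !mulr_ge0 ?sqrtr_ge0 ?exprn_ge0 ?m_mul_ge0 // mulr_ge0 // ltW.
rewrite /hnorm -(ger0_norm B_ge0) -sqrtr_sqr ler_sqrt ?sqr_ge0 //.
rewrite (normc_ip_Xmul_diag ipP XhP (Cinf_Xmul_dom uC)).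
have ralphaM : in_M (rev alpha ++ alpha) by rewrite /in_M size_cat ltn_addl.
apply: le_trans (uB _ ralphaM) _; rewrite size_cat size_rev -/k addnn.
have -> : (Num.sqrt C * (A * Hc) ^+ k * M) ^+ 2 = C * A ^+ k.*2 * (Hc ^+ k.*2 * M ^+ 2).
  by rewrite -addnn !exprMn sqr_sqrtr ?ltW // !exprD !expr2; ring.
by rewrite ler_wpM2l ?m_mul_rev_cat_le // mulr_ge0 ?exprn_ge0 ?ltW.
Qed.

End Characterisation.

Theorem lemma2p3 (R : realType) (H : lmodType R[i]) (ip : H -> H -> R[i])
  (Hip : is_inner_product ip) (Hcompl : hilbert_complete ip)
  (n : nat) (X : 'I_n -> H -> H) (D : 'I_n -> pred H)
  (HX : forall j, is_operator (D j) (X j))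
  (HXh : forall j, is_hermitian ip (D j) (X j) \/ is_skew_hermitian ip (D j) (X j))
  (m : 'I_n -> nat -> R) (Hmpos : forall j p, 0 < m j p)
  (HA2 : cond_A2 m) (u : H) :
  S_m ip X D m u <->
  (Cinf X D u /\ exists A C : R, [/\ 0 < A, 0 < C &
     forall alpha, in_M alpha ->
       Normc.normc (ip (Xmul X alpha u) u) <= C * A ^+ size alpha * m_mul m alpha]).
Proof.
have m_ge0 j p : 0 <= m j p by apply: ltW.
split=> [uS | [uC uB]].
- by split; [case: uS | exact: (S_m_ip_bounded Hip m_ge0 uS)].
- exact: (ip_bounded_S_m Hip m_ge0 HXh HA2 uC uB).
Qed.
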